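(* For every $n\ge 0$, the element $MC_n(\xi)=\sum_{|\alpha|=n}\mu(-(n+1);\overline\alpha)\,r_*[\mathbb{C}P^{n-|\alpha|'}]\,a^\alpha$ equals \[ \sum_{k=0}^n r_*[\mathbb{C}P^{n-k}]\cdot\Big(a_0^{2n+1}\big(\textstyle\sum_{i\ge0}a_iz^i\big)^{-(n+1)}\Big)[z^k], \] where $S(z)[z^k]$ denotes the coefficient of $z^k$ in the formal power series $S(z)$.
   Context: Here $a_0,a_1,\ldots$ are the elements of $BP^*\llbracket\xi\rrbracket$ defined by $\prod_{i=0}^{p-1}([i]\xi+_Fx)=\sum_{i\ge0}a_ix^{i+1}$ for the $BP$ formal group law $F$ (in particular $a_0=\chi=\prod_{i=1}^{p-1}[i]\xi$, which is not a zero divisor after reduction modulo $\langle p\rangle\xi$), $r_*[\mathbb{C}P^m]\in BP^{-2m}$ is the image of the class of $\mathbb{C}P^m$ under Quillen's map $r\colon MU_{(p)}\to BP$. Multi-indices $\alpha=(\alpha_0,\alpha_1,\ldots)$ of nonnegative integers, almost all zero; $\overline\alpha=(\alpha_1,\alpha_2,\ldots)$, $|\alpha|=\sum\alpha_i$, $|\alpha|'=\sum i\alpha_i$, $a^\alpha=\prod a_i^{\alpha_i}$. For an integer $m$, $\mu(m;\overline\alpha)$ is defined by $(1+b_1+b_2+\cdots)^m=\sum_{\overline\alpha}\mu(m;\overline\alpha)b_1^{\alpha_1}b_2^{\alpha_2}\cdots$. The coefficient of $z^k$ for $k\le n$ in $a_0^{2n+1}(\sum a_iz^i)^{-(n+1)}$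 is a polynomial in the $a_i$. *)

From HB Require Import structures.
From mathcomp Require Import all_boot all_order all_algebra.
From mathcomp Require Import fraction.
From mathcomp Require Import mpoly.
Set Implicit Arguments. Unset Strict Implicit. Unset Printing Implicit Defensive.
Import Order.TTheory GRing.Theory Num.Theory.
Local Open Scope ring_scope.

(* mu(m; abar) for abar = (alpha_1, ..., alpha_K) (coordinate i of abar is
   alpha_(i+1)): the coefficient of b_1^alpha_1 ... b_K^alpha_K in
   (1 + b_1 + ... + b_K)^m.  For m < 0 the power series (1+B)^(-1),
   B = b_1 + ... + b_K, is computed modulo terms of total degree > |abar|
   as the truncated geometric series sum_(j <= |abar|) (-B)^j, which does not
   affect the coefficient of a monomial of total degree |abar|. *)
Definition mu (K : nat) (m : int) (abar : 'I_K -> nat) : int :=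
  let B : {mpoly int[K]} := \sum_(i < K) 'X_i in
  let D := (\sum_(i < K) abar i)%N in
  let S := if (0 <= m)%R then (1 + B) ^+ `|m|%N
           else (\sum_(j < D.+1) (- B) ^+ j) ^+ `|m|%N in
  S@_[multinom abar i | i < K].

(* Multi-indices alpha = (alpha_0, ..., alpha_n) with |alpha| = n and
   |alpha|' <= n (all other alpha contribute 0 since [CP^m] = 0 for m < 0,
   and alpha_i = 0 for i > n is forced by |alpha|' <= n). *)
Definition abs_mi (n : nat) (al : {ffun 'I_n.+1 -> 'I_n.+1}) : nat :=
  (\sum_(i < n.+1) al i)%N.
Definition abs'_mi (n : nat) (al : {ffun 'I_n.+1 -> 'I_n.+1}) : nat :=
  (\sum_(i < n.+1) i * al i)%N.

(* MC_n(xi) = sum_(|alpha| = n) mu(-(n+1); alpha-bar) r_*[CP^(n - |alpha|')] a^alpha,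
   where cp m stands for r_*[CP^m]. *)
Definition MC (R : comRingType) (a cp : nat -> R) (n : nat) : R :=
  \sum_(al : {ffun 'I_n.+1 -> 'I_n.+1} |
          (abs_mi al == n) && (abs'_mi al <= n)%N)
     ((mu (- (n.+1)%:Z) (fun i : 'I_n => nat_of_ord (al (lift ord0 i))))%:~R
      * cp (n - abs'_mi al)%N
      * \prod_(i < n.+1) a i ^+ al i).

Definition trunc_inv (F : fieldType) (N : nat) (P Q : {poly F}) : bool :=
  'X^N %| P * Q - 1.

(* Write the series as [a_0 (1 + B z)] with [B z = sum_(i >= 1) (a_i / a_0) z^i].
   Modulo [z^(n+1)] its inverse is [a_0^-1 sum_(j <= n) (-B)^j], so the first
   [n+1] coefficients of [Q^(n+1)] are those of [a_0^-(n+1) T(B)^(n+1)] with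
   [T(x) = sum_(j <= n) (-x)^j].  Now [(T(b_1 + b_2 + ...))^(n+1)] has the
   [mu(-(n+1); alpha-bar)] as its coefficients in degrees [<= n], and substituting
   [b_i := (a_i / a_0) z^i] sends [b^alpha-bar] to [z^|alpha|'].  Hence the
   coefficient of [z^k] collects the [alpha-bar] with [|alpha|' = k]; completing
   them by [alpha_0 = n - |alpha-bar|] and clearing the powers of [a_0] yields
   the part of [MC_n] with [|alpha|' = k]. *)
Set Warnings "-notation-overridden,-ambiguous-paths,-notation-incompatible-prefix,-deprecated".
From HB Require Import structures.
From mathcomp Require Import all_boot all_order all_algebra.
From mathcomp Require Import fraction mpoly.
From mathcomp Require Import zify ring.
Set Implicit Arguments. Unset Strict Implicit. Unset Printing Implicit Defensive.
Import GRing.Theory.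
Local Open Scope ring_scope.

Lemma mcoeff_homogM_lt (R : nzRingType) K e (p q : {mpoly R[K]}) (m : 'X_{1..K}) :
  p \is e.-homog -> (mdeg m < e)%N -> (p * q)@_m = 0.
Proof.
move=> hp lt_me; rewrite mcoeffM big1 // => -[k1 k2] /=.
set m1 := (k1 : 'X_{1..K}) => /eqP mE.
rewrite (dhomog_nemf_coeff hp) ?mul0r //; apply: contraTneq lt_me => <-.
by rewrite -leqNgt mE mdegD leq_addr.
Qed.

Lemma sum_mpolyX_homog (R : nzRingType) K :
  (\sum_(i < K) 'X_i : {mpoly R[K]}) \is 1.-homog.
Proof.
apply: rpred_sum => i _.
by rewrite dhomogX mdeg_eq1; apply/existsP; exists i.
Qed.

Lemma geometric_sum_split (R : pzSemiRingType) (x : R) D N : (D <= N)%N ->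
  \sum_(j < N.+1) x ^+ j = \sum_(j < D.+1) x ^+ j + x ^+ D.+1 * \sum_(j < N - D) x ^+ j.
Proof.
move=> le_DN; have -> : N.+1 = (D.+1 + (N - D))%N by lia.
rewrite big_split_ord mulr_sumr; congr (_ + _); apply: eq_bigr => j _.
by rewrite -exprD.
Qed.

Lemma mcoeff_geometric_trunc (R : comNzRingType) K (p : {mpoly R[K]}) c D N
    (m : 'X_{1..K}) :
  p \is 1.-homog -> mdeg m = D -> (D <= N)%N ->
  ((\sum_(j < D.+1) p ^+ j) ^+ c)@_m = ((\sum_(j < N.+1) p ^+ j) ^+ c)@_m.
Proof.
move=> hp hm le_DN; apply/eqP; rewrite eq_sym -subr_eq0 -mcoeffB subrXX.
rewrite (geometric_sum_split p le_DN) addrAC subrr add0r -!mulrA.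
apply/eqP/(@mcoeff_homogM_lt _ _ D.+1); rewrite ?hm //.
by have := dhomogMn D.+1 hp; rewrite mul1n.
Qed.

(* [(1 + X_1 + ... + X_K)^-(n+1)] modulo monomials of degree [> n]. *)
Definition trunc_invpow K n : {mpoly int[K]} :=
  (\sum_(j < n.+1) (- \sum_(i < K) 'X_i) ^+ j) ^+ n.+1.

Lemma mu_negS K n (abar : 'I_K -> nat) : (\sum_i abar i <= n)%N ->
  mu (- (n.+1)%:Z) abar = (trunc_invpow K n)@_[multinom abar i | i < K].
Proof.
move=> le_abar_n; apply: mcoeff_geometric_trunc le_abar_n.
  by rewrite dhomogN sum_mpolyX_homog.
by rewrite mdegE; apply: eq_bigr => i _; rewrite mnmE.
Qed.

Lemma sum_reindex_support (V : nmodType) (T : eqType) (I : finType) (s : seq T)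
    (P : pred I) (g : I -> T) (F : T -> V) :
  uniq s -> {in P &, injective g} ->
  (forall i, P i -> g i \notin s -> F (g i) = 0) ->
  (forall j, j \in s -> F j != 0 -> exists2 i, P i & j = g i) ->
  \sum_(j <- s) F j = \sum_(i | P i) F (g i).
Proof.
move=> s_uniq g_inj F_out F_supp.
rewrite (bigID (fun i => g i \in s)) /= [X in _ + X]big1 ?addr0; last first.
  by move=> i /andP[Pi gi_out]; exact: F_out.
rewrite -[in RHS]big_filter -(big_map g xpredT).
set t := map g _.
have t_sub_s j : j \in t -> j \in s.
  by case/mapP=> i; rewrite mem_filter => /andP[/andP[_ ?] _] ->.
rewrite big_seq (bigID (fun j => j \in t)) /= [X in _ + X]big1 ?addr0; last first.
  move=> j /andP[js jt]; apply/eqP; apply: contraNT jt => /(F_supp j js)[i Pi ej].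
  by rewrite ej map_f // mem_filter Pi -ej js mem_index_enum.
rewrite -big_filter; apply/perm_big/uniq_perm.
- exact: filter_uniq.
- rewrite map_inj_in_uniq ?filter_uniq ?index_enum_uniq // => x y.
  by rewrite !mem_filter => /andP[/andP[Px _] _] /andP[/andP[Py _] _]; apply: g_inj.
- by move=> j; rewrite mem_filter; apply/andP/idP => [[/andP[]]|jt] //; rewrite jt t_sub_s.
Qed.

Section MultiIndex.
Variable n : nat.
Implicit Types (al : {ffun 'I_n.+1 -> 'I_n.+1}) (m : 'X_{1..n}).

(* [tail_mnm al] is the paper's [alpha-bar]; [weight (tail_mnm al)] is [|alpha|']. *)
Definition tail_mnm al : 'X_{1..n} := [multinom nat_of_ord (al (lift ord0 i)) | i < n].

Definition weight m : nat := (\sum_(i < n) i.+1 * m i)%N.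

Lemma mdeg_tail_mnm al : mdeg (tail_mnm al) = (\sum_(i < n) al (lift ord0 i))%N.
Proof. by rewrite mdegE; apply: eq_bigr => i _; rewrite mnmE. Qed.

Lemma abs_mi_tail al : abs_mi al = (al ord0 + mdeg (tail_mnm al))%N.
Proof. by rewrite /abs_mi big_ord_recl mdeg_tail_mnm. Qed.

Lemma weight_tail_mnm al : weight (tail_mnm al) = abs'_mi al.
Proof.
rewrite /abs'_mi big_ord_recl /= mul0n add0n.
by apply: eq_bigr => i _; rewrite mnmE.
Qed.

Lemma mdeg_le_weight m : (mdeg m <= weight m)%N.
Proof. by rewrite mdegE; apply: leq_sum => i _; rewrite leq_pmull. Qed.

Lemma tail_mnm_inj al1 al2 : abs_mi al1 = n -> abs_mi al2 = n ->
  tail_mnm al1 = tail_mnm al2 -> al1 = al2.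
Proof.
rewrite !abs_mi_tail => abs1 abs2 tail12.
have tail12_i i : nat_of_ord (al1 (lift ord0 i)) = al2 (lift ord0 i).
  by have := congr1 (fun m : 'X_{1..n} => m i) tail12; rewrite !mnmE.
apply/ffunP => j; apply: val_inj; case: (unliftP ord0 j) => [i ->|->].
  exact: tail12_i.
by apply/eqP; rewrite -(eqn_add2r (mdeg (tail_mnm al1))) abs1 tail12 abs2.
Qed.

Lemma tail_mnm_surj m : (mdeg m <= n)%N -> exists2 al, abs_mi al = n & m = tail_mnm al.
Proof.
move=> le_mn; have lt_mi i : (m i < n.+1)%N.
  by rewrite ltnS (leq_trans _ le_mn) // mdegE (bigD1 i) //= leq_addr.
pose al : {ffun 'I_n.+1 -> 'I_n.+1} := [ffun j => inord
  (if unlift ord0 j is Some i then m i else (n - mdeg m)%N)].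
have tail_al : m = tail_mnm al.
  by apply/mnmP => i; rewrite mnmE ffunE liftK inordK.
exists al => //; rewrite abs_mi_tail -tail_al ffunE unlift_none inordK.
  exact: subnK.
by rewrite ltnS leq_subr.
Qed.

End MultiIndex.

Definition MC_monomial (R : comNzRingType) (a : nat -> R) n
    (al : {ffun 'I_n.+1 -> 'I_n.+1}) : R :=
  (mu (- (n.+1)%:Z) (fun i : 'I_n => nat_of_ord (al (lift ord0 i))))%:~R
  * \prod_(i < n.+1) a i ^+ al i.

Lemma coef_eq_dvdXn (F : fieldType) N (p q : {poly F}) k :
  'X^N %| p - q -> (k < N)%N -> p`_k = q`_k.
Proof.
move=> /dvdpP[r pqE] lt_kN; apply/eqP.
by rewrite -subr_eq0 -coefB pqE coefMXn lt_kN.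
Qed.

Lemma trunc_inv_dvd_sub (F : fieldType) N (P Q1 Q2 : {poly F}) :
  trunc_inv N P Q1 -> trunc_inv N P Q2 -> 'X^N %| Q1 - Q2.
Proof.
move=> inv1 inv2; have -> : Q1 - Q2 = Q2 * (P * Q1 - 1) - Q1 * (P * Q2 - 1) by ring.
by rewrite dvdp_sub ?dvdp_mull.
Qed.

Section TruncatedInverse.
Variables (F : fieldType) (c : nat -> F) (n : nat).
Hypothesis c0_neq0 : c 0%N != 0.

Definition ratio (i : 'I_n) : F := c i.+1 / c 0%N.
Definition tail_term (i : 'I_n) : {poly F} := (ratio i)%:P * 'X^(i.+1).
Definition tail : {poly F} := \sum_(i < n) tail_term i.
Definition geom_tail : {poly F} := \sum_(j < n.+1) (- tail) ^+ j.

Lemma poly_headE : \poly_(i < n.+1) c i = (c 0%N)%:P * (1 + tail).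
Proof.
rewrite poly_def big_ord_recl expr0 alg_polyC mulrDr mulr1 mulr_sumr.
congr (_ + _); apply: eq_bigr => i _.
by rewrite /tail_term /ratio mulrA -polyCM mulrCA mulfV // mulr1 mul_polyC.
Qed.

Lemma dvdp_Xn_tail_exp : 'X^(n.+1) %| tail ^+ n.+1.
Proof.
apply: dvdp_exp2r; have -> : tail = 'X * \sum_(i < n) (ratio i)%:P * 'X^i.
  by rewrite mulr_sumr; apply: eq_bigr => i _; rewrite /tail_term exprS mulrCA.
exact: dvdp_mulIl.
Qed.

Lemma trunc_inv_geom_tail :
  trunc_inv n.+1 (\poly_(i < n.+1) c i) ((c 0%N)^-1%:P * geom_tail).
Proof.
rewrite /trunc_inv poly_headE mulrCA !mulrA -polyCM mulVf // mul1r.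
have -> : (1 + tail) * geom_tail - 1 = - (- tail) ^+ n.+1.
  rewrite (_ : 1 + tail = - (- tail - 1)); last by rewrite opprB opprK.
  by rewrite mulNr -subrX1 opprB addrAC subrr add0r.
by rewrite dvdpNr exprNn dvdp_mull ?dvdp_Xn_tail_exp.
Qed.

Lemma mmap_trunc_invpow : mmap intr tail_term (trunc_invpow n n) = geom_tail ^+ n.+1.
Proof.
rewrite rmorphXn rmorph_sum; congr (_ ^+ _); apply: eq_bigr => j _.
rewrite rmorphXn rmorphN rmorph_sum; congr ((- _) ^+ _); apply: eq_bigr => i _.
by rewrite /= mmapX mmap1U.
Qed.

Lemma coef_geom_tail_exp k : (geom_tail ^+ n.+1)`_k =
  \sum_(m <- msupp (trunc_invpow n n))
    ((trunc_invpow n n)@_m)%:~R * \prod_i ratio i ^+ m i * (k == weight m)%:R.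
Proof.
rewrite -mmap_trunc_invpow /mmap coef_sum; apply: eq_bigr => m _.
rewrite /mmap1 /tail_term; set ratio_m := \prod_i ratio i ^+ m i.
under eq_bigr => i _ do rewrite exprMn -exprM.
rewrite big_split /= prodrXr.
under eq_bigr => i _ do rewrite -(rmorphXn polyC).
rewrite -(rmorph_prod polyC) [in LHS]mulrzl coefMrz coefCM coefXn -mulrzl mulrA /ratio_m.
by congr (_ * _ * (_ == _)%:R); apply: eq_bigr => i _; rewrite mulnC.
Qed.

Lemma prod_ratio_tail_mnm (al : {ffun 'I_n.+1 -> 'I_n.+1}) : abs_mi al = n ->
  c 0%N ^+ n * \prod_i ratio i ^+ tail_mnm al i = \prod_(i < n.+1) c i ^+ al i.
Proof.
move=> abs_n; have -> : c 0%N ^+ n = c 0%N ^+ al ord0 * c 0%N ^+ mdeg (tail_mnm al).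
  by rewrite -exprD -abs_mi_tail abs_n.
rewrite big_ord_recl mdegE -mulrA.
congr (_ * _); rewrite -prodrXr -big_split; apply: eq_bigr => i _.
by rewrite mnmE exprMn /= mulrCA -exprMn mulfV // expr1n mulr1 /bump leq0n.
Qed.

Lemma coef_trunc_inv_exp (Q : {poly F}) k :
  trunc_inv n.+1 (\poly_(i < n.+1) c i) Q -> (k < n.+1)%N ->
  c 0%N ^+ (2 * n).+1 * (Q ^+ n.+1)`_k =
  \sum_(al : {ffun 'I_n.+1 -> 'I_n.+1} | (abs_mi al == n) && (abs'_mi al == k))
     MC_monomial c al.
Proof.
move=> invQ lt_kn.
have dvd_exp : 'X^(n.+1) %| Q ^+ n.+1 - ((c 0%N)^-1%:P * geom_tail) ^+ n.+1.
  by rewrite subrXX dvdp_mulr // (trunc_inv_dvd_sub invQ trunc_inv_geom_tail).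
rewrite (coef_eq_dvdXn dvd_exp lt_kn) exprMn -(rmorphXn polyC) coefCM mulrA.
have -> : c 0%N ^+ (2 * n).+1 * (c 0%N)^-1 ^+ n.+1 = c 0%N ^+ n.
  by rewrite exprVn (_ : (2 * n).+1 = n + n.+1)%N ?exprD ?mulfK ?expf_neq0 //; lia.
rewrite coef_geom_tail_exp mulr_sumr.
rewrite (sum_reindex_support (P := fun al => (abs_mi al == n) && (abs'_mi al == k))
  (g := @tail_mnm n) (msupp_uniq _)).
- apply: eq_bigr => al /andP[/eqP abs_n /eqP abs'_k].
  rewrite weight_tail_mnm abs'_k eqxx mulr1 mulrCA prod_ratio_tail_mnm // /MC_monomial mu_negS //.
  by have := leq_addl (al ord0) (mdeg (tail_mnm al)); rewrite -abs_mi_tail abs_n mdeg_tail_mnm.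
- by move=> al1 al2 /andP[/eqP ? _] /andP[/eqP ? _]; apply: tail_mnm_inj.
- by move=> al _ /memN_msupp_eq0 ->; rewrite !mul0r mulr0.
- move=> m _; have [k_wm _|] := eqVneq k (weight m); last by rewrite !mulr0 eqxx.
  have [|al abs_n m_al] := @tail_mnm_surj n m.
    by move: lt_kn; rewrite k_wm ltnS; apply: leq_trans (mdeg_le_weight m).
  by exists al; rewrite // abs_n k_wm m_al weight_tail_mnm !eqxx.
Qed.
End TruncatedInverse.

Lemma leq_inord_eq n m (k : 'I_n.+1) : (m <= n)%N && (inord m == k) = (m == k).
Proof.
case: leqP => [le_mn|lt_nm] /=; first by rewrite -val_eqE /= inordK.
by apply/esym/negbTE; apply: contraTneq lt_nm => ->; rewrite -leqNgt -ltnS.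
Qed.

Lemma MC_by_weight (R : comNzRingType) (a cp : nat -> R) n :
  MC a cp n = \sum_(k < n.+1) cp (n - k)%N *
    \sum_(al : {ffun 'I_n.+1 -> 'I_n.+1} | (abs_mi al == n) && (abs'_mi al == k))
      MC_monomial a al.
Proof.
rewrite /MC (partition_big (fun al => inord (abs'_mi al) : 'I_n.+1) xpredT) //.
apply: eq_bigr => k _; rewrite mulr_sumr; apply: eq_big => al.
  by rewrite -andbA leq_inord_eq.
by case/andP=> /andP[_ le_n] /eqP <-; rewrite inordK // /MC_monomial mulrAC mulrC.
Qed.

Lemma tofrac_MC_monomial (R : idomainType) (a : nat -> R) n al :
  tofrac (MC_monomial a al) = MC_monomial (fun i => tofrac (a i)) (n := n) al.
Proof.
rewrite rmorphM rmorph_int rmorph_prod; congr (_ * _).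
by apply: eq_bigr => i _; rewrite rmorphXn.
Qed.

Theorem proposition5p7 (R : idomainType) (a cp : nat -> R) (n : nat) :
  a 0%N != 0 ->
  forall Q : {poly {fraction R}},
    trunc_inv n.+1 (\poly_(i < n.+1) tofrac (a i)) Q ->
    tofrac (MC a cp n) =
    \sum_(k < n.+1)
       tofrac (cp (n - k)%N) * ((tofrac (a 0%N)) ^+ (2 * n).+1 * (Q ^+ n.+1)`_k).
Proof.
move=> a0_neq0 Q invQ; have a0_frac_neq0 : tofrac (a 0%N) != 0 by rewrite tofrac_eq0.
rewrite MC_by_weight rmorph_sum; apply: eq_bigr => k _.
rewrite (coef_trunc_inv_exp a0_frac_neq0 invQ (ltn_ord k)) rmorphM rmorph_sum.
by congr (_ * _); apply: eq_bigr => al _; rewrite -tofrac_MC_monomial.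
Qed.
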